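(* If $f\in E(S^1)$ satisfies $\operatorname{Lip}(f)<1$, then $f\in E^+(S^1)$. In particular, $E^+(S^1)$ is dense in $E(S^1)$ with respect to the sup norm.
   Context: $E(S^1)$ is the set of $1$-Lipschitz functions $f:\mathbb{R}\to\mathbb{R}$ (write $f_\alpha=f(\alpha)$) with $f_{\alpha+\pi}+f_\alpha=\pi$ for all $\alpha$, equipped with the sup norm. $S^1\subset E(S^1)$ is the set of functions $\alpha\mapsto\arccos(\cos(\alpha-\tau))$, $\tau\in\mathbb{R}$. Elements of $E(S^1)\setminus S^1$ take values in $(0,\pi)$. For such $f$ and $\beta-\alpha\notin\pi\mathbb{Z}$, \[ p_{\alpha,\beta}(f)=\frac{1-\cos(\beta-\alpha)^2-\cos(f_\alpha)^2-\cos(f_\beta)^2+2\cos(\beta-\alpha)\cos(f_\alpha)\cos(f_\beta)}{\sin(\beta-\alpha)^2\sin(f_\alpha)^2\sin(f_\beta)^2}. \] $E^+(S^1)$ denotes the set of $f\in E(S^1)\setminus S^1$ with $p_{\alpha,\beta}(f)>0$ for all $\alpha,\beta$ with $\alpha\ne\beta$ mod $\pi$. *)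

From Stdlib Require Import Reals Ratan.
Open Scope R_scope.

Definition lipschitz_with (L : R) (f : R -> R) : Prop :=
  forall x y : R, Rabs (f x - f y) <= L * Rabs (x - y).

Definition in_E (f : R -> R) : Prop :=
  lipschitz_with 1 f /\ forall a : R, f (a + PI) + f a = PI.

Definition in_S1 (f : R -> R) : Prop :=
  exists tau : R, forall a : R, f a = acos (cos (a - tau)).

Definition p_ab (alpha beta : R) (f : R -> R) : R :=
  (1 - (cos (beta - alpha))^2 - (cos (f alpha))^2 - (cos (f beta))^2
     + 2 * cos (beta - alpha) * cos (f alpha) * cos (f beta))
  / ((sin (beta - alpha))^2 * (sin (f alpha))^2 * (sin (f beta))^2).

Definition cong_mod_pi (alpha beta : R) : Prop :=
  exists k : Z, beta - alpha = IZR k * PI.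

Definition in_Eplus (f : R -> R) : Prop :=
  in_E f /\ ~ in_S1 f /\
  forall alpha beta : R, ~ cong_mod_pi alpha beta -> p_ab alpha beta f > 0.

(** A map [f] in [E(S^1)] is [2 PI]-periodic and satisfies [f (a + PI) = PI - f a].
    Write [a = f alpha], [b = f beta], [c = cos (beta - alpha)]. The numerator of
    [p_ab alpha beta f] factors as [(c - cos (a + b)) * (cos (b - a) - c)].
    If [Lip f < 1], then [|f beta - f alpha| < |beta - alpha|] once [beta - alpha]
    is reduced to [[-PI, PI)], so [cos (b - a) > c] since cosine decreases on
    [[0, PI]]; applied to [alpha + PI] in place of [alpha] the same inequality
    reads [cos (a + b) < c]. The Lipschitz bound also forces [0 < f < PI], so the
    denominator is positive as well, and [f] is not of the form [acos (cos (. - tau))],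
    which vanishes at [tau]. Density follows by contracting [f] towards the constant
    [PI / 2], which stays in [E(S^1)] and has Lipschitz constant [< 1]. *)
From Stdlib Require Import Reals Ratan Lra Lia.
Open Scope R_scope.

Lemma periodic_IZR (g : R -> R) (T : R) :
  (forall x, g (x + T) = g x) -> forall (n : Z) x, g (x + IZR n * T) = g x.
Proof.
  intros Hg.
  assert (Hnat : forall (m : nat) x, g (x + INR m * T) = g x).
  { induction m as [|m IH]; intro x.
    - now rewrite Rmult_0_l, Rplus_0_r.
    - rewrite S_INR, <- (IH x), <- (Hg (x + INR m * T)). f_equal; ring. }
  intros n x. destruct (Z.le_gt_cases 0 n) as [Hn|Hn].
  - destruct (IZN n Hn) as [m ->]. rewrite <- INR_IZR_INZ. apply Hnat.
  - destruct (IZN (- n) ltac:(lia)) as [m Hm].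
    replace n with (- Z.of_nat m)%Z by lia. rewrite opp_IZR, <- INR_IZR_INZ.
    rewrite <- (Hnat m (x + - INR m * T)). f_equal; ring.
Qed.

Lemma E_periodic (f : R -> R) : in_E f -> forall x, f (x + 2 * PI) = f x.
Proof.
  intros [_ Hanti] x. pose proof (Hanti x). pose proof (Hanti (x + PI)).
  replace (x + 2 * PI) with (x + PI + PI) by ring. lra.
Qed.

Lemma antipodal_lipschitz_bound (f : R -> R) (L : R) :
  lipschitz_with L f -> (forall a, f (a + PI) + f a = PI) ->
  forall a, PI - L * PI <= 2 * f a <= PI + L * PI.
Proof.
  intros Hlip Hanti a. pose proof (Hlip (a + PI) a) as H.
  replace (f (a + PI) - f a) with (PI - 2 * f a) in H by (pose proof (Hanti a); lra).
  replace (a + PI - a) with PI in H by ring.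
  rewrite (Rabs_right PI) in H by (pose proof PI_RGT_0; lra).
  pose proof (Rle_abs (PI - 2 * f a)). pose proof (Rle_abs (- (PI - 2 * f a))).
  rewrite Rabs_Ropp in *. lra.
Qed.

Lemma E_range (f : R -> R) : in_E f -> forall a, 0 <= f a <= PI.
Proof.
  intros [Hlip Hanti] a. pose proof (antipodal_lipschitz_bound f 1 Hlip Hanti a). lra.
Qed.

Lemma contraction_E_range (f : R -> R) (L : R) :
  in_E f -> L < 1 -> lipschitz_with L f -> forall a, 0 < f a < PI.
Proof.
  intros [_ Hanti] HL Hlip a. pose proof PI_RGT_0.
  pose proof (antipodal_lipschitz_bound f L Hlip Hanti a). nra.
Qed.

Lemma reduce_mod_2PI (x : R) :
  exists (n : Z) (t : R), x = t + IZR n * (2 * PI) /\ - PI <= t < PI.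
Proof.
  pose proof PI_RGT_0.
  set (n := Int_part ((x + PI) / (2 * PI))).
  destruct (base_Int_part ((x + PI) / (2 * PI))) as [Hlo Hhi]. fold n in Hlo, Hhi.
  assert (Hq : (x + PI) / (2 * PI) * (2 * PI) = x + PI) by (field; lra).
  exists n, (x - IZR n * (2 * PI)). split; [ring | split; nra].
Qed.

Lemma cos_lt_of_Rabs_lt (u t : R) : Rabs u < Rabs t -> Rabs t <= PI -> cos t < cos u.
Proof.
  intros Hut Ht.
  assert (Hcos_abs : forall x, cos (Rabs x) = cos x).
  { intro x. unfold Rabs. destruct (Rcase_abs x); [apply cos_neg | reflexivity]. }
  rewrite <- (Hcos_abs t), <- (Hcos_abs u).
  apply cos_decreasing_1; pose proof (Rabs_pos u); lra.
Qed.

Lemma contraction_cos_gap (f : R -> R) (L : R) (alpha beta : R) :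
  (forall x, f (x + 2 * PI) = f x) -> L < 1 -> lipschitz_with L f ->
  (forall k : Z, beta - alpha <> IZR k * (2 * PI)) ->
  cos (beta - alpha) < cos (f beta - f alpha).
Proof.
  intros Hper HL Hlip Hk. pose proof PI_RGT_0.
  destruct (reduce_mod_2PI (beta - alpha)) as [n [t [Ht Hrange]]].
  assert (Hbeta : beta = alpha + t + IZR n * (2 * PI)) by lra.
  assert (Hcos : cos (beta - alpha) = cos t).
  { rewrite Ht. apply (periodic_IZR cos). intro x.
    now rewrite cos_plus, cos_2PI, sin_2PI, Rmult_1_r, Rmult_0_r, Rminus_0_r. }
  assert (Htpos : 0 < Rabs t).
  { apply Rabs_pos_lt. intros ->. apply (Hk n). lra. }
  assert (Hfdist : Rabs (f beta - f alpha) < Rabs t).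
  { rewrite Hbeta, (periodic_IZR f _ Hper).
    pose proof (Hlip (alpha + t) alpha) as Hl.
    replace (alpha + t - alpha) with t in Hl by ring. nra. }
  rewrite Hcos. apply cos_lt_of_Rabs_lt; [exact Hfdist | apply Rabs_le; lra].
Qed.

Lemma p_ab_numerator_factor (a b c : R) :
  1 - c ^ 2 - cos a ^ 2 - cos b ^ 2 + 2 * c * cos a * cos b
  = (c - cos (a + b)) * (cos (b - a) - c).
Proof.
  rewrite cos_plus, cos_minus.
  pose proof (sin2_cos2 a). pose proof (sin2_cos2 b). unfold Rsqr in *. nra.
Qed.

Lemma not_cong_mod_pi_2PI (alpha beta : R) :
  ~ cong_mod_pi alpha beta -> forall k : Z, beta - alpha <> IZR k * (2 * PI).
Proof.
  intros Hc k Hk. apply Hc. exists (2 * k)%Z. rewrite mult_IZR. lra.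
Qed.

Lemma sin_neq0_of_not_cong_mod_pi (alpha beta : R) :
  ~ cong_mod_pi alpha beta -> sin (beta - alpha) <> 0.
Proof. intros Hc Hs. apply Hc, sin_eq_0_0, Hs. Qed.

Lemma contraction_in_Eplus (f : R -> R) :
  in_E f -> (exists L : R, L < 1 /\ lipschitz_with L f) -> in_Eplus f.
Proof.
  intros HE [L [HL Hlip]].
  pose proof (contraction_E_range f L HE HL Hlip) as Hrange.
  pose proof (E_periodic f HE) as Hper.
  split; [exact HE | split].
  - intros [tau Htau]. specialize (Htau tau).
    rewrite Rminus_diag, cos_0, acos_1 in Htau. specialize (Hrange tau). lra.
  - intros alpha beta Hc. unfold p_ab. rewrite p_ab_numerator_factor.
    assert (Hc' : ~ cong_mod_pi (alpha + PI) beta).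
    { intros [k Hk]. apply Hc. exists (k + 1)%Z. rewrite plus_IZR. lra. }
    pose proof (contraction_cos_gap f L alpha beta Hper HL Hlip
                  (not_cong_mod_pi_2PI _ _ Hc)) as Hgap.
    pose proof (contraction_cos_gap f L (alpha + PI) beta Hper HL Hlip
                  (not_cong_mod_pi_2PI _ _ Hc')) as Hgap'.
    (* [f (alpha + PI) = PI - f alpha] turns the second gap into [cos (a + b) < c]. *)
    replace (f beta - f (alpha + PI)) with (- (PI - (f alpha + f beta))) in Hgap'
      by (destruct HE as [_ Hanti]; pose proof (Hanti alpha); lra).
    replace (beta - (alpha + PI)) with (- (PI - (beta - alpha))) in Hgap' by ring.
    rewrite !cos_neg, !Rtrigo_facts.cos_pi_minus in Hgap'.
    pose proof (sin_gt_0 _ (proj1 (Hrange alpha)) (proj2 (Hrange alpha))).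
    pose proof (sin_gt_0 _ (proj1 (Hrange beta)) (proj2 (Hrange beta))).
    pose proof (Rsqr_pos_lt _ (sin_neq0_of_not_cong_mod_pi _ _ Hc)).
    rewrite Rsqr_pow2 in *.
    apply Rdiv_lt_0_compat; [apply Rmult_lt_0_compat; lra |].
    apply Rmult_lt_0_compat; [apply Rmult_lt_0_compat |]; auto using pow_lt.
Qed.

Definition contract_to_center (s : R) (f : R -> R) (x : R) : R :=
  (1 - s) * f x + s * (PI / 2).

Lemma lipschitz_contract_to_center (f : R -> R) (s : R) :
  in_E f -> s <= 1 -> lipschitz_with (1 - s) (contract_to_center s f).
Proof.
  intros [Hlip _] Hs x y. unfold contract_to_center.
  replace ((1 - s) * f x + s * (PI / 2) - ((1 - s) * f y + s * (PI / 2)))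
    with ((1 - s) * (f x - f y)) by ring.
  rewrite Rabs_mult, (Rabs_right (1 - s)) by lra.
  specialize (Hlip x y). nra.
Qed.

Lemma E_contract_to_center (f : R -> R) (s : R) :
  in_E f -> 0 <= s <= 1 -> in_E (contract_to_center s f).
Proof.
  intros HE Hs. split.
  - intros x y. pose proof (lipschitz_contract_to_center f s HE (proj2 Hs) x y).
    pose proof (Rabs_pos (x - y)). nra.
  - intro a. destruct HE as [_ Hanti]. unfold contract_to_center.
    specialize (Hanti a). nra.
Qed.

Lemma contract_to_center_dist (f : R -> R) (s : R) :
  in_E f -> 0 <= s -> forall x, Rabs (f x - contract_to_center s f x) <= s * (PI / 2).
Proof.
  intros HE Hs x. pose proof (E_range f HE x). unfold contract_to_center.
  replace (f x - ((1 - s) * f x + s * (PI / 2))) with (s * (f x - PI / 2)) by ring.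
  rewrite Rabs_mult, (Rabs_right s) by lra.
  apply Rmult_le_compat_l; [lra | apply Rabs_le; lra].
Qed.

Lemma contract_to_center_in_Eplus (f : R -> R) (s : R) :
  in_E f -> 0 < s <= 1 -> in_Eplus (contract_to_center s f).
Proof.
  intros HE Hs. apply contraction_in_Eplus; [apply E_contract_to_center; [exact HE | lra] |].
  exists (1 - s). split; [lra | apply lipschitz_contract_to_center; [exact HE | lra]].
Qed.

Theorem lemma3p3 :
  (forall f : R -> R, in_E f ->
     (exists L : R, L < 1 /\ lipschitz_with L f) -> in_Eplus f)
  /\
  (forall f : R -> R, in_E f -> forall eps : R, eps > 0 ->
     exists g : R -> R, in_Eplus g /\ forall x : R, Rabs (f x - g x) < eps).
Proof.
  split; [exact contraction_in_Eplus |].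
  intros f HE eps Heps. pose proof PI_RGT_0.
  set (s := Rmin (1 / 2) (eps / PI)).
  assert (Hs : 0 < s <= 1 / 2).
  { split; [apply Rmin_glb_lt; [lra | apply Rdiv_lt_0_compat; lra] | apply Rmin_l]. }
  assert (HsPI : s * PI <= eps).
  { pose proof (Rmin_r (1 / 2) (eps / PI)) as Hr. fold s in Hr.
    apply (Rmult_le_compat_r PI) in Hr; [| lra].
    unfold Rdiv in Hr. rewrite Rmult_assoc, Rinv_l, Rmult_1_r in Hr; lra. }
  exists (contract_to_center s f). split.
  - apply contract_to_center_in_Eplus; [exact HE | lra].
  - intro x. pose proof (contract_to_center_dist f s HE (Rlt_le _ _ (proj1 Hs)) x). lra.
Qed.
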